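(* Let the spot price $\pi$ have CDF $F_{\pi}$ and monotonically decreasing density $f_{\pi}$ on $[\underline{\pi},\bar{\pi}]$ with $0\le\underline{\pi}<\bar{\pi}$, and let $t_k,t_e,t_s,t_r>0$ with $\frac{t_e}{2}<t_s\le t_e$. Consider the problem (P3): minimize over $(q,p)$ $$\Phi_3(p,q)=q\,t_e\bar{\pi}+\frac{(1-q)t_e}{1-\frac{t_r}{t_k}(1-F_{\pi}(p))}\cdot\frac{\int_{\underline{\pi}}^{p}x f_{\pi}(x)\,dx}{F_{\pi}(p)}$$ subject to $q t_e\le t_s$, $\;\underline{\pi}\le p\le\bar{\pi}$, $\;0\le q\le 1$, $$\frac{(1-q)t_e}{1-\frac{t_r}{t_k}(1-F_{\pi}(p))}\cdot\frac{1}{F_{\pi}(p)}\le t_s,\qquad t_r<\frac{t_k}{2(1-F_{\pi}(p))}.$$ Then the optimal bid price is $p^*=\bar{\pi}$ and the optimal fraction of the job run on the on-demand instance is $q^*=1-\frac{t_s}{t_e}$.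
   Context: Model (persistent request): a user runs a fraction $q$ of a job (execution time $t_e$, deadline $t_s$) on an on-demand instance at price $\bar{\pi}$ and the rest on a spot instance with bid $p$, where an interrupted job resumes when the bid again exceeds the spot price, incurring a recovery time $t_r$ per resumption; spot prices in slots of length $t_k$ are i.i.d. with CDF $F_{\pi}$ and monotonically decreasing density $f_{\pi}$ on $[\underline{\pi},\bar{\pi}]$. *)

From Stdlib Require Import Reals Lra.
From Coquelicot Require Import Coquelicot.
Open Scope R_scope.

Definition is_density (f : R -> R) (lo hi : R) : Prop :=
  (forall x, lo <= x <= hi -> 0 <= f x) /\ is_RInt f lo hi 1.

Definition decreasing_on (f : R -> R) (lo hi : R) : Prop :=
  forall x y, lo <= x -> x <= y -> y <= hi -> f y <= f x.

Definition cdf (f : R -> R) (lo p : R) : R := RInt f lo p.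

Definition pmoment (f : R -> R) (lo p : R) : R := RInt (fun x => x * f x) lo p.

Definition Phi3 (f : R -> R) (lo hi tk te tr : R) (p q : R) : R :=
  q * te * hi
  + (1 - q) * te / (1 - tr / tk * (1 - cdf f lo p))
    * (pmoment f lo p / cdf f lo p).

(* The constraint t_r < t_k / (2 (1 - F(p))) is
   written multiplied out, 2 t_r (1 - F(p)) < t_k, so that it reads as
   "no constraint" (t_r < +oo) when F(p) = 1; F(p) > 0 is required so that
   the objective and the deadline constraint (which divide by F(p)) are
   defined. *)
Definition feasible3 (f : R -> R) (lo hi tk te ts tr : R) (q p : R) : Prop :=
  q * te <= ts /\
  lo <= p <= hi /\
  0 <= q <= 1 /\
  0 < cdf f lo p /\
  (1 - q) * te / (1 - tr / tk * (1 - cdf f lo p)) * (1 / cdf f lo p) <= ts /\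
  2 * tr * (1 - cdf f lo p) < tk.

From Stdlib Require Import Reals Lra.
From Coquelicot Require Import Coquelicot.
Open Scope R_scope.

(* Write F = F(p), M = int_lo^p x f and u = (t_r/t_k)(1 - F) >= 0.  The deadline
   constraint says that K := (1-q) t_e / ((1-u) F) is at most t_s, and the on-demand
   part satisfies (1-q) t_e = K (1-u) F <= K F.  Since x <= hi on the support,
   M <= hi F and int_p^hi x f <= hi (1 - F), so
     Phi3(p,q) >= t_e hi - K (hi F - M) >= t_e hi - t_s (hi F - M)
              >= t_e hi - t_s hi + t_s E[pi] = Phi3(hi, 1 - t_s/t_e).  The one analytic fact needed is that
   x f(x) is Riemann integrable whenever f is, which holds because x is a uniform
   limit of step functions on [lo, hi]. *)

Lemma ex_RInt_subinterval (h : R -> R) (a b u v : R) :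
  a <= u -> u <= v -> v <= b -> ex_RInt h a b -> ex_RInt h u v.
Proof.
  intros Hau Huv Hvb Hab.
  apply (ex_RInt_Chasles_2 (V := R_CompleteNormedModule) h a); [lra|].
  apply (ex_RInt_Chasles_1 (V := R_CompleteNormedModule) h a v b); [lra|exact Hab].
Qed.

Lemma ex_RInt_unif_lim (h : R -> R) (hn : nat -> R -> R) (a b : R) :
  a <= b ->
  (forall n, ex_RInt (hn n) a b) ->
  (forall eps : posreal, exists N : nat,
     forall n x, (N <= n)%nat -> a <= x <= b -> Rabs (hn n x - h x) < eps) ->
  ex_RInt h a b.
Proof.
  (* [filterlim_RInt] asks for uniform convergence on all of R: compose with the
     clamp onto [a, b], which changes nothing inside the interval. *)
  intros Hab Hint Hcv.
  set (clamp x := Rmax a (Rmin b x)).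
  assert (clamp_in : forall x, a <= clamp x <= b).
  { intros x; unfold clamp, Rmax, Rmin; repeat destruct Rle_dec; lra. }
  assert (clamp_id : forall x, Rmin a b < x < Rmax a b -> clamp x = x).
  { intros x; rewrite Rmin_left, Rmax_right by lra.
    unfold clamp, Rmax, Rmin; repeat destruct Rle_dec; lra. }
  destruct (filterlim_RInt (fun n x => hn n (clamp x)) a b eventually _
              (fun x => h (clamp x)) (fun n => RInt (fun x => hn n (clamp x)) a b))
    as [I [_ HI]].
  - intros n; apply RInt_correct.
    apply ex_RInt_ext with (hn n); [|apply Hint].
    intros x Hx; rewrite clamp_id by exact Hx; reflexivity.
  - intros P [eps Heps]. destruct (Hcv eps) as [N HN].
    exists N; intros n Hn; apply Heps; intros x.
    exact (HN n (clamp x) Hn (clamp_in x)).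
  - apply ex_RInt_ext with (fun x => h (clamp x)); [|exists I; exact HI].
    intros x Hx; rewrite clamp_id by exact Hx; reflexivity.
Qed.

Definition step_below (a d x : R) : R := a + d * IZR (Zfloor ((x - a) / d)).

Lemma step_below_bound (a d x : R) :
  0 < d -> 0 <= x - step_below a d x < d.
Proof.
  intros Hd. unfold step_below.
  destruct (Zfloor_bound ((x - a) / d)) as [Hfloor_le Hfloor_gt].
  assert (Ex : x = a + d * ((x - a) / d)) by (field; lra).
  split; rewrite Ex at 1; nra.
Qed.

Lemma step_below_on_piece (a d x : R) (k : nat) :
  0 < d -> a + INR k * d < x < a + INR (S k) * d ->
  step_below a d x = a + d * INR k.
Proof.
  intros Hd Hx. unfold step_below. rewrite S_INR in Hx.
  rewrite (Zfloor_eq (Z.of_nat k)), <- INR_IZR_INZ; [reflexivity|].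
  rewrite <- INR_IZR_INZ. split.
  - apply Rmult_le_reg_r with d; [lra|]. unfold Rdiv. rewrite Rmult_assoc, Rinv_l; lra.
  - apply Rmult_lt_reg_r with d; [lra|]. unfold Rdiv. rewrite Rmult_assoc, Rinv_l; lra.
Qed.

Lemma ex_RInt_step_below_mul (g : R -> R) (a d : R) (n : nat) :
  0 < d -> ex_RInt g a (a + INR n * d) ->
  ex_RInt (fun x => step_below a d x * g x) a (a + INR n * d).
Proof.
  intros Hd. induction n as [|n IH]; intros Hg.
  - replace (a + INR 0 * d) with a by (simpl; ring). apply ex_RInt_point.
  - assert (Hn : 0 <= INR n * d) by (apply Rmult_le_pos; [apply pos_INR|lra]).
    assert (Hstep : a + INR n * d <= a + INR (S n) * d) by (rewrite S_INR; lra).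
    apply ex_RInt_Chasles with (a + INR n * d).
    + apply IH, (ex_RInt_subinterval g a (a + INR (S n) * d)); [lra|lra|lra|exact Hg].
    + apply ex_RInt_ext with (fun x => (a + d * INR n) * g x).
      { intros x Hx. rewrite Rmin_left, Rmax_right in Hx by exact Hstep.
        rewrite step_below_on_piece with (k := n); tauto. }
      apply (ex_RInt_scal g).
      apply (ex_RInt_subinterval g a (a + INR (S n) * d)); [lra|lra|lra|exact Hg].
Qed.

Lemma inv_INR_S_eventually_lt (c : R) (eps : posreal) :
  exists N : nat, forall n, (N <= n)%nat -> c / INR (S n) < eps.
Proof.
  assert (Hlim : is_lim_seq (fun n => c * / INR (S n)) 0).
  { replace (Finite 0) with (Rbar_mult c 0) by (simpl; f_equal; ring).
    apply is_lim_seq_scal_l. apply (is_lim_seq_incr_1 (fun n => / INR n)).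
    apply (is_lim_seq_inv INR p_infty); [apply is_lim_seq_INR|discriminate]. }
  apply is_lim_seq_spec in Hlim. destruct (Hlim eps) as [N HN].
  exists N; intros n Hn. specialize (HN n Hn).
  rewrite Rminus_0_r in HN. eapply Rle_lt_trans; [apply Rle_abs|exact HN].
Qed.

Lemma ex_RInt_id_mul (g : R -> R) (a b : R) :
  ex_RInt g a b -> ex_RInt (fun x => x * g x) a b.
Proof.
  enough (Hle : forall u v, u <= v -> ex_RInt g u v -> ex_RInt (fun x => x * g x) u v).
  { intros Hg. destruct (Rle_or_lt a b) as [Hab|Hba]; [now apply Hle|].
    apply ex_RInt_swap, Hle; [lra|now apply ex_RInt_swap]. }
  clear a b. intros a b Hab Hg.
  destruct (Req_dec a b) as [<-|Hneq]; [apply ex_RInt_point|].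
  destruct (ex_RInt_ub g a b Hg) as [M HM].
  rewrite Rmin_left, Rmax_right in HM by lra.
  set (d n := (b - a) / INR (S n)).
  assert (Hd : forall n, 0 < d n)
    by (intros n; apply Rdiv_lt_0_compat; [lra|apply lt_0_INR, Nat.lt_0_succ]).
  assert (Hb : forall n, b = a + INR (S n) * d n)
    by (intros n; unfold d; field; apply not_0_INR, Nat.neq_succ_0).
  apply ex_RInt_unif_lim with (hn := fun n x => step_below a (d n) x * g x); [lra| |].
  - intros n. rewrite (Hb n). apply ex_RInt_step_below_mul; [apply Hd|].
    rewrite <- Hb. exact Hg.
  - intros eps. destruct (inv_INR_S_eventually_lt ((b - a) * M) eps) as [N HN].
    exists N; intros n x Hn Hx.
    pose proof (step_below_bound a (d n) x (Hd n)) as Hstep.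
    replace (step_below a (d n) x * g x - x * g x)
      with (- ((x - step_below a (d n) x) * g x)) by ring.
    rewrite Rabs_Ropp, Rabs_mult, (Rabs_pos_eq (x - _)) by lra.
    apply Rle_lt_trans with (d n * M).
    + apply Rmult_le_compat; [lra|apply Rabs_pos|lra|apply HM; exact Hx].
    + replace (d n * M) with ((b - a) * M / INR (S n))
        by (unfold d; field; apply not_0_INR, Nat.neq_succ_0).
      exact (HN n Hn).
Qed.

Section Density.

Variables (f : R -> R) (lo hi : R).
Hypothesis f_density : is_density f lo hi.

Let ex_RInt_f : ex_RInt f lo hi.
Proof. exists 1; apply f_density. Qed.

Let ex_RInt_xf : ex_RInt (fun x => x * f x) lo hi.
Proof. apply ex_RInt_id_mul, ex_RInt_f. Qed.

Lemma cdf_hi : cdf f lo hi = 1.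
Proof. apply is_RInt_unique, f_density. Qed.

Lemma cdf_compl (p : R) : lo <= p <= hi -> 1 - cdf f lo p = RInt f p hi.
Proof.
  intros Hp. rewrite <- cdf_hi. unfold cdf.
  rewrite <- (RInt_Chasles (V := R_CompleteNormedModule) f lo p hi).
  - change (plus ?u ?v) with (u + v). ring.
  - apply (ex_RInt_subinterval f lo hi); [lra|lra|lra|exact ex_RInt_f].
  - apply (ex_RInt_subinterval f lo hi); [lra|lra|lra|exact ex_RInt_f].
Qed.

Lemma pmoment_compl (p : R) :
  lo <= p <= hi -> pmoment f lo hi - pmoment f lo p = RInt (fun x => x * f x) p hi.
Proof.
  intros Hp. unfold pmoment.
  rewrite <- (RInt_Chasles (V := R_CompleteNormedModule) _ lo p hi).
  - change (plus ?u ?v) with (u + v). ring.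
  - apply (ex_RInt_subinterval _ lo hi); [lra|lra|lra|exact ex_RInt_xf].
  - apply (ex_RInt_subinterval _ lo hi); [lra|lra|lra|exact ex_RInt_xf].
Qed.

Lemma cdf_le_1 (p : R) : lo <= p <= hi -> cdf f lo p <= 1.
Proof.
  intros Hp. cut (0 <= 1 - cdf f lo p); [lra|].
  rewrite (cdf_compl p Hp). apply RInt_ge_0; [lra| |].
  - apply (ex_RInt_subinterval f lo hi); [lra|lra|lra|exact ex_RInt_f].
  - intros x Hx. apply f_density. lra.
Qed.

Lemma RInt_moment_le_mass (u v : R) :
  lo <= u -> u <= v -> v <= hi -> RInt (fun x => x * f x) u v <= hi * RInt f u v.
Proof.
  intros Hu Huv Hv.
  assert (Hf : ex_RInt f u v)
    by (apply (ex_RInt_subinterval f lo hi); [lra|lra|lra|exact ex_RInt_f]).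
  change (hi * RInt f u v) with (scal hi (RInt f u v)).
  rewrite <- (RInt_scal (V := R_CompleteNormedModule) f u v hi Hf).
  apply RInt_le; [exact Huv| | |].
  - apply (ex_RInt_subinterval _ lo hi); [lra|lra|lra|exact ex_RInt_xf].
  - apply (ex_RInt_scal f), Hf.
  - intros x Hx. apply Rmult_le_compat_r; [apply f_density|]; lra.
Qed.

End Density.

Lemma split_cost_lower_bound (te ts hi q u F M m : R) :
  0 < te -> 0 <= hi -> q <= 1 -> 0 < F -> 0 <= u < 1 ->
  M <= hi * F -> m - M <= hi * (1 - F) ->
  (1 - q) * te / (1 - u) * (1 / F) <= ts ->
  te * hi - ts * hi + ts * m <= q * te * hi + (1 - q) * te / (1 - u) * (M / F).
Proof.
  intros Hte Hhi Hq HF Hu HM Hm Hdeadline.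
  set (K := (1 - q) * te / (1 - u) * (1 / F)) in *.
  assert (HK : 0 <= K).
  { unfold K, Rdiv. repeat apply Rmult_le_pos; try lra;
      apply Rlt_le, Rinv_0_lt_compat; lra. }
  assert (Hwork : (1 - q) * te = K * (1 - u) * F) by (unfold K; field; lra).
  replace ((1 - q) * te / (1 - u) * (M / F)) with (K * M) by (unfold K; field; lra).
  clearbody K.
  assert (0 <= K * u * F * hi) by (repeat apply Rmult_le_pos; lra).
  assert (0 <= (ts - K) * (hi * F - M)) by (apply Rmult_le_pos; lra).
  assert (0 <= ts * (hi * (1 - F) - (m - M))) by (apply Rmult_le_pos; lra).
  assert (q * te * hi = te * hi - K * (1 - u) * F * hi) by (rewrite <- Hwork; ring).
  nra.
Qed.

Lemma recovery_factor_bounds (tk tr F : R) :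
  0 < tk -> 0 < tr -> F <= 1 -> 2 * tr * (1 - F) < tk -> 0 <= tr / tk * (1 - F) < 1.
Proof.
  intros Htk Htr HF Hrec. split.
  - apply Rmult_le_pos; [apply Rlt_le, Rdiv_lt_0_compat|]; lra.
  - apply Rmult_lt_reg_l with tk; [lra|].
    replace (tk * (tr / tk * (1 - F))) with (tr * (1 - F)) by (field; lra).
    lra.
Qed.

Lemma Phi3_full_cdf (f : R -> R) (lo hi tk te tr p q : R) :
  cdf f lo p = 1 ->
  Phi3 f lo hi tk te tr p q = q * te * hi + (1 - q) * te * pmoment f lo p.
Proof.
  intros HF. unfold Phi3. rewrite HF.
  replace (1 - tr / tk * (1 - 1)) with 1 by ring. field.
Qed.

Lemma feasible3_full_bid (f : R -> R) (lo hi tk te ts tr : R) :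
  lo <= hi -> cdf f lo hi = 1 -> 0 < tk -> 0 < te -> te / 2 < ts -> ts <= te ->
  feasible3 f lo hi tk te ts tr (1 - ts / te) hi.
Proof.
  intros Hlohi HF1 Htk Hte Hhalf Htse.
  assert (Hfrac : 0 < ts / te <= 1).
  { split; [apply Rdiv_lt_0_compat; lra|].
    apply Rmult_le_reg_r with te; [exact Hte|]. field_simplify; lra. }
  unfold feasible3. rewrite HF1.
  replace ((1 - ts / te) * te) with (te - ts) by (field; lra).
  replace ((1 - (1 - ts / te)) * te / (1 - tr / tk * (1 - 1)) * (1 / 1)) with ts
    by (field; lra).
  repeat split; lra.
Qed.

Theorem proposition3 (f : R -> R) (lo hi tk te ts tr : R) :
  0 <= lo -> lo < hi ->
  is_density f lo hi ->
  decreasing_on f lo hi ->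
  0 < tk -> 0 < te -> 0 < ts -> 0 < tr ->
  te / 2 < ts -> ts <= te ->
  feasible3 f lo hi tk te ts tr (1 - ts / te) hi /\
  (forall q p, feasible3 f lo hi tk te ts tr q p ->
     Phi3 f lo hi tk te tr hi (1 - ts / te) <= Phi3 f lo hi tk te tr p q).
Proof.
  intros Hlo Hlohi Hf _ Htk Hte _ Htr Hhalf Htse.
  pose proof (cdf_hi f lo hi Hf) as HF1.
  split; [apply feasible3_full_bid; lra|].
  intros q p (_ & Hp & Hq & HF & Hdeadline & Hrecovery).
  rewrite (Phi3_full_cdf f lo hi tk te tr hi _ HF1).
  replace ((1 - ts / te) * te * hi + (1 - (1 - ts / te)) * te * pmoment f lo hi)
    with (te * hi - ts * hi + ts * pmoment f lo hi) by (field; lra).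
  unfold Phi3. apply split_cost_lower_bound; try lra.
  - apply recovery_factor_bounds; [lra|lra|apply (cdf_le_1 f lo hi Hf p Hp)|lra].
  - apply (RInt_moment_le_mass f lo hi Hf); lra.
  - rewrite (pmoment_compl f lo hi Hf p Hp), (cdf_compl f lo hi Hf p Hp).
    apply (RInt_moment_le_mass f lo hi Hf); lra.
Qed.
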